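(* Let $K$ be a field, $S=K[X_1,\ldots,X_n]$ with the standard grading, $I\subset S$ a monomial ideal such that $R=S/I$ is generalized Cohen–Macaulay, $d=\dim R$, and $\mathfrak m$ the graded maximal ideal of $R$. Let $\rho_j=\max\{\nu_j(u)\mid u\in G(I)\}$ for $j=1,\ldots,n$ and $k=\sum_{j=1}^n\rho_j-n+1$. Then $R$ is $k$-Buchsbaum, i.e. $\mathfrak m^{k}H^i_{\mathfrak m}(R)=0$ for all $i\neq d$.
   Context: $R$ is generalized Cohen–Macaulay if $H^i_{\mathfrak m}(R)$ has finite length for all $i\ne\dim R$. $G(I)$ is the minimal set of monomial generators of $I$; for a monomial $u=X_1^{c_1}\cdots X_n^{c_n}$, $\nu_j(u)=c_j$. *)

From HB Require Import structures.
From mathcomp Require Import all_boot all_order all_algebra.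
From mathcomp Require Import mpoly.
Set Implicit Arguments. Unset Strict Implicit. Unset Printing Implicit Defensive.
Import Order.TTheory GRing.Theory Num.Theory.
Local Open Scope ring_scope.

(* A monomial ideal I of S = K[X_1..X_n] is given by a finite list G of
   exponent vectors (monomials X^u, u : 'X_{1..n}); I = (X^u | u in G). *)

Section Defs.
Variables (K : fieldType) (n : nat).
Implicit Types (G : seq 'X_{1..n}).

Definition in_monideal G (p : {mpoly K[n]}) : Prop :=
  exists cs : seq {mpoly K[n]},
    p = \sum_(i < size G) cs`_i * 'X_[nth 0%MM G i].

Definition is_ideal (P : {mpoly K[n]} -> Prop) : Prop :=
  [/\ P 0, (forall x y, P x -> P y -> P (x + y))
    & (forall a x, P x -> P (a * x))].

Definition is_prime_ideal (P : {mpoly K[n]} -> Prop) : Prop :=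
  [/\ is_ideal P, ~ P 1 & (forall x y, P (x * y) -> P x \/ P y)].

(* a chain P_0 < P_1 < ... < P_e of prime ideals of S containing I,
   i.e. a chain of primes of R = S/I of length e *)
Definition prime_chain G (e : nat) (P : nat -> {mpoly K[n]} -> Prop) : Prop :=
  [/\ (forall i, (i <= e)%N -> is_prime_ideal (P i)),
      (forall i, (i <= e)%N -> forall p, in_monideal G p -> P i p)
    & (forall i, (i < e)%N ->
         (forall p, P i p -> P i.+1 p) /\ exists p, P i.+1 p /\ ~ P i p)].

Definition krull_dim_quot G (d : nat) : Prop :=
  (exists P, prime_chain G d P) /\
  (forall e P, prime_chain G e P -> (e <= d)%N).

(* For F a subset of the variables, the component of
   degree a of the localization R_{x_F} = S_{x_F}/I S_{x_F} is K * x^a if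
   a_j >= 0 for all j notin F and x^a notin I S_{x_F}, and is 0 otherwise.
   [cech_cell G F a] tests this. *)
Definition cech_cell G (F : {set 'I_n}) (a : 'I_n -> int) : bool :=
  [forall j, (j \notin F) ==> (0 <= a j)] &&
  ~~ has (fun u : 'X_{1..n} =>
            [forall j, (j \notin F) ==> ((u j)%:Z <= a j)]) G.

(* homogeneous cochains of cohomological degree p and Z^n-degree a:
   elements of C^p_a = (+)_{#|F| = p} (R_{x_F})_a, coordinates on the
   basis x^a of the nonzero summands *)
Definition cech_cochain G (p : nat) (a : 'I_n -> int)
    (c : {ffun {set 'I_n} -> K}) : Prop :=
  forall F, c F != 0 -> (#|F| == p)%N && cech_cell G F a.

Definition cech_sign (E : {set 'I_n}) (j : 'I_n) : K :=
  (-1) ^+ #|[set l in E | (l < j)%N]|.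

(* Cech differential: e_E |-> sum_{j notin E} sign(E,j) e_{E u {j}},
   where each component R_{x_E} -> R_{x_{E u j}} is the localization map *)
Definition cech_d G (a : 'I_n -> int) (c : {ffun {set 'I_n} -> K})
    : {ffun {set 'I_n} -> K} :=
  [ffun F => if cech_cell G F a
             then \sum_(j in F) cech_sign (F :\ j) j * c (F :\ j)
             else 0].

Definition cech_cocycle G p a c : Prop :=
  cech_cochain G p a c /\ cech_d G a c = 0.

Definition cech_coboundary G (p : nat) a c : Prop :=
  if p is q.+1 then exists c', cech_cochain G q a c' /\ cech_d G a c' = c
  else c = 0.

Definition loccoh_nonzero G (i : nat) (a : 'I_n -> int) : Prop :=
  exists c, cech_cocycle G i a c /\ ~ cech_coboundary G i a c.

(* multiplication by the monomial x^b, from degree a to degree a + b *)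
Definition shift (a : 'I_n -> int) (b : 'I_n -> nat) : 'I_n -> int :=
  fun j => a j + (b j)%:Z.

Definition cech_mulmon G (a : 'I_n -> int) (b : 'I_n -> nat)
    (c : {ffun {set 'I_n} -> K}) : {ffun {set 'I_n} -> K} :=
  [ffun F => if cech_cell G F (shift a b) then c F else 0].

(* H^i_m(R) has finite length: only finitely many nonzero graded pieces
   (each piece is finite dimensional over K = R/m) *)
Definition loccoh_finite_length G (i : nat) : Prop :=
  exists N : nat, forall a : 'I_n -> int,
    (exists j, (N < `|a j|)%N) -> ~ loccoh_nonzero G i a.

Definition gen_CM G (d : nat) : Prop :=
  forall i, i != d -> loccoh_finite_length G i.

(* m^k H^i_m(R) = 0 : m^k is generated by the monomials x^b with |b| = k,
   and H^i_m(R) is Z^n-graded, so this says every x^b * [c] vanishes *)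
Definition mpow_annihilates G (k : nat) (i : nat) : Prop :=
  forall (a : 'I_n -> int) (b : 'I_n -> nat), (\sum_j b j)%N = k ->
    forall c, cech_cocycle G i a c ->
      cech_coboundary G i (shift a b) (cech_mulmon G a b c).

End Defs.

From HB Require Import structures.
From mathcomp Require Import all_boot all_order all_algebra.
From mathcomp Require Import mpoly zify ring.
From Stdlib Require Import Classical.
Import Order.TTheory GRing.Theory Num.Theory.
Local Open Scope ring_scope.

(* H^i_m(R)_a is the cohomology of the degree-a strand of the Z^n-graded Cech
   complex, and that strand only depends on which cells (F, a) are nonzero.
   If a_j < 0 for some j, the cells do not change when a_j is pushed to
   -infinity, so finite length of H^i_m(R) forces H^i_m(R)_a = 0.  If a >= 0
   and |b| = k = sum rho_j - n + 1, then a_j + b_j >= rho_j for some j by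
   pigeonhole; in degree a + b the cells then do not depend on whether j is in
   F, and contraction with e_j is a homotopy between the identity and zero.
   Either way x^b kills H^i_m(R)_a. *)

Lemma exists_ge_of_sum_lt (I : finType) (r s : I -> nat) :
  (\sum_i r i < \sum_i (s i).+1)%N -> exists i, (r i <= s i)%N.
Proof.
move=> lt_sum; have [i le_rs | lt_sr] := pickP (fun i => (r i <= s i)%N).
  by exists i.
suff: (\sum_i (s i).+1 <= \sum_i r i)%N by rewrite leqNgt lt_sum.
by apply: leq_sum => i _; rewrite ltnNge lt_sr.
Qed.

Section CechComplex.
Set Implicit Arguments. Unset Strict Implicit.

Variables (K : fieldType) (n : nat) (G : seq 'X_{1..n}).
Implicit Types (a : 'I_n -> int) (b : 'I_n -> nat) (j l x y : 'I_n)
  (E F : {set 'I_n}) (c : {ffun {set 'I_n} -> K}).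

Lemma cech_signK E j : cech_sign K E j * cech_sign K E j = 1.
Proof. by rewrite -expr2 sqrr_sign. Qed.

Lemma cech_signU1 E x y : x \notin E ->
  cech_sign K (x |: E) y = (if (x < y)%N then -1 else 1) * cech_sign K E y.
Proof.
move=> xE; rewrite /cech_sign.
have -> : [set z in x |: E | (z < y)%N] =
    if (x < y)%N then x |: [set z in E | (z < y)%N] else [set z in E | (z < y)%N].
  apply/setP => z; rewrite !inE; case: ifP => xy; rewrite ?inE;
  by case: (eqVneq z x) => [->|] //=; rewrite ?xy ?(negbTE xE).
case: ifP => _; last by rewrite mul1r.
by rewrite cardsU1 inE (negbTE xE) add1n exprS.
Qed.

Lemma cech_sign_swap E j l : j \notin E -> l \notin E -> j != l ->
  cech_sign K (j |: E) l * cech_sign K (l |: E) j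
    = - (cech_sign K E j * cech_sign K E l).
Proof.
move=> jE lE neq_jl; rewrite !cech_signU1 //.
case: (ltngtP j l) => [_|_|/val_inj eq_jl]; try ring.
by rewrite eq_jl eqxx in neq_jl.
Qed.

Lemma cech_mulmon0 a b : cech_mulmon G a b (0 : {ffun {set 'I_n} -> K}) = 0.
Proof. by apply/ffunP => F; rewrite !ffunE; case: ifP. Qed.

(* The localization maps R_{x_F} -> R_{x_{F u j}} are isomorphisms in degree a. *)
Definition cech_cell_free a j := forall F, cech_cell G F a = cech_cell G (F :\ j) a.

Lemma cech_cell_free_saturated a j :
  (forall u, u \in G -> (u j)%:Z <= a j) -> 0 <= a j -> cech_cell_free a j.
Proof.
move=> le_Ga ge0_a F; rewrite /cech_cell; congr andb.
  apply: eq_forallb => x; rewrite in_setD1.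
  by case: (eqVneq x j) => [->|] //=; rewrite ge0_a !implybT.
congr negb; apply: eq_in_has => u uG /=; apply: eq_forallb => x; rewrite in_setD1.
by case: (eqVneq x j) => [->|] //=; rewrite le_Ga // !implybT.
Qed.

Definition cech_homotopy j c : {ffun {set 'I_n} -> K} :=
  [ffun E : {set 'I_n} => if j \in E then 0 else cech_sign K E j * c (j |: E)].

Section Contraction.
Variables (a : 'I_n -> int) (j : 'I_n).
Hypothesis free_j : cech_cell_free a j.

Lemma cech_d_homotopy p c : cech_cocycle G p a c -> cech_d G a (cech_homotopy j c) = c.
Proof.
move=> [chain_c dc0]; apply/ffunP => F; rewrite /cech_d ffunE.
case: ifP => cell_F; last first.
  by case: (eqVneq (c F) 0) => // /chain_c /andP[_]; rewrite cell_F.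
have [jF | jNF] := boolP (j \in F).
  rewrite (bigD1 j) //= big1 ?addr0; last first.
    by move=> l /andP[_ lj]; rewrite ffunE in_setD1 eq_sym lj jF mulr0.
  by rewrite ffunE setD11 mulrA cech_signK mul1r setD1K.
(* the cocycle condition at j |: F expresses c F through the faces containing j *)
have := congr1 (fun f : {ffun {set 'I_n} -> K} => f (j |: F)) dc0.
rewrite !ffunE free_j setU1K // cell_F (bigD1 j) ?setU11 //= setU1K //.
rewrite (eq_bigl (fun l => l \in F)) => [dc0_jF|l]; last first.
  rewrite in_setU1; case: (eqVneq l j) => [->|] /=.
    by rewrite (negbTE jNF).
  by rewrite andbT.
have sum_jF : \sum_(l in F) cech_sign K ((j |: F) :\ l) l * c ((j |: F) :\ l)
    = - (cech_sign K F j * c F).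
  by apply/eqP; rewrite -addr_eq0 addrC dc0_jF.
transitivity (- (cech_sign K F j * \sum_(l in F)
    cech_sign K ((j |: F) :\ l) l * c ((j |: F) :\ l))); last first.
  by rewrite sum_jF mulrN opprK mulrA cech_signK mul1r.
rewrite mulr_sumr -sumrN; apply: eq_bigr => l lF; rewrite ffunE.
have lNF_l : l \notin F :\ l by rewrite setD11.
have jNF_l : j \notin F :\ l by rewrite in_setD1 (negbTE jNF) andbF.
have neq_jl : j != l by apply: contraNneq jNF => ->.
have -> : (j |: F) :\ l = j |: (F :\ l).
  by apply/setP => x; rewrite !inE; case: (eqVneq x j) => [->|]; rewrite ?neq_jl.
have -> : cech_sign K F j = cech_sign K (l |: F :\ l) j by rewrite setD1K.
by rewrite (negbTE jNF_l) !mulrA cech_sign_swap 1?eq_sym // mulNr opprK.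
Qed.

Lemma cech_cochain_homotopy p c :
  cech_cochain G p.+1 a c -> cech_cochain G p a (cech_homotopy j c).
Proof.
move=> chain_c E; rewrite ffunE; case: ifP => jE; first by rewrite eqxx.
rewrite mulf_eq0 negb_or => /andP[_ /chain_c /andP[]].
by rewrite cardsU1 jE add1n eqSS => -> /=; rewrite free_j setU1K ?jE.
Qed.

Lemma cech_coboundary_free p c : cech_cocycle G p a c -> cech_coboundary G p a c.
Proof.
move=> cocycle_c; have dh := cech_d_homotopy cocycle_c.
case: p cocycle_c dh => [|p] [chain_c _] dh /=; last first.
  by exists (cech_homotopy j c); split => //; apply: cech_cochain_homotopy.
(* a 0-coboundary is 0, and h c vanishes since it would live in degree -1 *)
rewrite -dh; apply/ffunP => F; rewrite !ffunE; case: ifP => // _.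
apply: big1 => l _; rewrite ffunE; case: ifP => _; first by rewrite mulr0.
have [->|/chain_c /andP[/eqP/cards0_eq jF0 _]] := eqVneq (c (j |: (F :\ l))) 0.
  by rewrite !mulr0.
by have := setU11 j (F :\ l); rewrite jF0 inE.
Qed.

End Contraction.

Lemma cech_cell_shift_subset a b E F : E \subset F ->
  cech_cell G E a -> cech_cell G F (shift a b) ->
  cech_cell G F a /\ cech_cell G E (shift a b).
Proof.
rewrite /cech_cell /shift => sEF /andP[/forallP ge0_E _] /andP[_ notin_F].
split; apply/andP; split.
- apply/forallP => x; apply/implyP => xF; apply: (implyP (ge0_E x)).
  by apply: contra xF; apply: (subsetP sEF).
- apply: contra notin_F => /hasP[u uG /forallP le_u]; apply/hasP; exists u => //.
  by apply/forallP => x; apply/implyP => xF; have := implyP (le_u x) xF; lia.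
- by apply/forallP => x; apply/implyP => xE; have := implyP (ge0_E x) xE; lia.
- apply: contra notin_F => /hasP[u uG /forallP le_u]; apply/hasP; exists u => //.
  apply/forallP => x; apply/implyP => xF; apply: (implyP (le_u x)).
  by apply: contra xF; apply: (subsetP sEF).
Qed.

Lemma cech_d_mulmon p a b c : cech_cochain G p a c ->
  cech_mulmon G a b (cech_d G a c) = cech_d G (shift a b) (cech_mulmon G a b c).
Proof.
move=> chain_c; apply/ffunP => F; rewrite /cech_mulmon /cech_d !ffunE.
have [cell_Fab|] := boolP (cech_cell G F (shift a b)) => //=.
have cell_face l : l \in F -> c (F :\ l) != 0 ->
    cech_cell G F a /\ cech_cell G (F :\ l) (shift a b).
  move=> _ /chain_c /andP[_ cell_l].
  exact: cech_cell_shift_subset (subD1set F l) cell_l cell_Fab.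
case: ifP => cell_Fa.
  apply: eq_bigr => l lF; rewrite ffunE.
  have [->|/(cell_face l lF)[_ ->]] := eqVneq (c (F :\ l)) 0 => //.
  by rewrite if_same.
symmetry; apply: big1 => l lF; rewrite ffunE.
have [->|/(cell_face l lF)[]] := eqVneq (c (F :\ l)) 0; last by rewrite cell_Fa.
by rewrite if_same mulr0.
Qed.

Lemma cech_cochain_mulmon p a b c :
  cech_cochain G p a c -> cech_cochain G p (shift a b) (cech_mulmon G a b c).
Proof.
by move=> chain_c F; rewrite ffunE; case: ifP => [_ /chain_c /andP[-> _]|]; rewrite ?eqxx.
Qed.

Lemma cech_cocycle_mulmon p a b c :
  cech_cocycle G p a c -> cech_cocycle G p (shift a b) (cech_mulmon G a b c).
Proof.
move=> [chain_c dc0]; split; first exact: cech_cochain_mulmon.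
by rewrite -(cech_d_mulmon _ chain_c) dc0 cech_mulmon0.
Qed.

Lemma cech_coboundary_mulmon p a b c :
  cech_coboundary G p a c -> cech_coboundary G p (shift a b) (cech_mulmon G a b c).
Proof.
case: p => [->|p [c' [chain_c' <-]]]; first exact: cech_mulmon0.
exists (cech_mulmon G a b c'); split; first exact: cech_cochain_mulmon.
by rewrite (cech_d_mulmon b chain_c').
Qed.

Lemma cech_cell_set_neg a j (m : int) : a j < 0 -> m < 0 ->
  forall F, cech_cell G F a = cech_cell G F (fun x => if x == j then m else a x).
Proof.
move=> lt0_a lt0_m F; rewrite /cech_cell.
have [jF | jNF] := boolP (j \in F).
  congr andb; first by apply: eq_forallb => x; case: (eqVneq x j) => [->|]; rewrite ?jF.
  congr negb; apply: eq_has => u /=; apply: eq_forallb => x.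
  by case: (eqVneq x j) => [->|]; rewrite ?jF.
have ge0_false (a' : 'I_n -> int) : a' j < 0 ->
    [forall x, (x \notin F) ==> (0 <= a' x)] = false.
  by move=> lt0_a'; apply/negbTE/forallP => /(_ j); rewrite jNF /= leNgt lt0_a'.
by rewrite !ge0_false //= eqxx.
Qed.

Lemma loccoh_nonzero_eq_cells a a' i :
  (forall F, cech_cell G F a = cech_cell G F a') ->
  loccoh_nonzero K G i a -> loccoh_nonzero K G i a'.
Proof.
move=> eq_cells.
have eq_d c : cech_d G a c = cech_d G a' c.
  by apply/ffunP => F; rewrite !ffunE eq_cells.
have eq_chain p c : cech_cochain G p a c <-> cech_cochain G p a' c.
  by split=> chain_c F /chain_c; rewrite eq_cells.
case=> c [[/eq_chain chain_c dc0] not_bd]; exists c; split.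
  by split=> //; rewrite -eq_d.
apply: contra_not not_bd; case: i chain_c dc0 => // p _ _ [c' [/eq_chain ? ?]].
by exists c'; rewrite eq_d.
Qed.

Lemma cech_coboundary_of_finite_length i a j c :
  loccoh_finite_length K G i -> a j < 0 ->
  cech_cocycle G i a c -> cech_coboundary G i a c.
Proof.
move=> [N vanish] lt0_a cocycle_c; apply: NNPP => not_bd.
pose a' x := if x == j then - (N.+1)%:Z else a x.
apply: (vanish a'); first by exists j; rewrite /a' eqxx abszN absz_nat.
apply: (@loccoh_nonzero_eq_cells a); first exact: cech_cell_set_neg.
by exists c.
Qed.

End CechComplex.

Theorem theorem2p5 (K : fieldType) (n : nat) (G : seq 'X_{1..n}) (d : nat) :
  (* G is the minimal monomial generating set G(I) of I = (X^u | u in G) *)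
  (forall u v, u \in G -> v \in G -> (forall j, (u j <= v j)%N) -> u = v) ->
  krull_dim_quot K G d ->
  gen_CM K G d ->
  let rho := fun j : 'I_n => (\max_(u <- G) u j)%N in
  let k := ((\sum_(j < n) rho j) + 1 - n)%N in
  forall i : nat, i != d -> mpow_annihilates K G k i.
Proof.
move=> _ _ genCM rho k i /genCM finite_i a b sum_b c cocycle_c.
have [j lt0_a | ge0_a] := pickP (fun j => a j < 0).
  by apply: cech_coboundary_mulmon; apply: cech_coboundary_of_finite_length lt0_a _.
have {}ge0_a j : 0 <= a j by rewrite leNgt ge0_a.
have [j le_rho] : exists j, (rho j <= `|a j| + b j)%N.
  apply: exists_ge_of_sum_lt; rewrite -(eq_bigr _ (fun j _ => addn1 _)).
  rewrite !big_split /= sum_b sum1_card card_ord /k.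
  by move: (\sum_(j < n) rho j) => s; lia.
apply: (cech_coboundary_free (j := j)); last exact: cech_cocycle_mulmon.
apply: cech_cell_free_saturated => [u uG|]; rewrite /shift; have := ge0_a j; last lia.
have : (u j <= rho j)%N by apply: leq_bigmax_seq.
by move: le_rho; move: (rho j) => r; lia.
Qed.
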